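(* There exist a large set with multiplicity LS$(4,5,11;\mu)$ and a large set with multiplicity LS$(5,6,12;\mu)$ for each integer $\mu\geq 2$, with possible exceptions when $\mu\in\{3,5,7,9,11,13\}$.
   Context: A Steiner system S$(t,k,n)$ is a pair $(Q,B)$ where $Q$ is an $n$-set and $B$ is a collection of $k$-subsets (blocks) of $Q$ such that every $t$-subset of $Q$ is contained in exactly one block. A large set with multiplicity $\mu$, LS$(t,k,n;\mu)$, is a family (the same system may occur more than once) of Steiner systems S$(t,k,n)$ on a common $n$-set $Q$ such that every $k$-subset of $Q$ is a block of exactly $\mu$ of the systems. *)

From mathcomp Require Import all_boot.
Unset Printing Implicit Defensive.

Definition steiner_system (t k n : nat) (B : {set {set 'I_n}}) : Prop :=
  (forall b, b \in B -> #|b| = k) /\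
  (forall T : {set 'I_n}, #|T| = t -> #|[set b in B | T \subset b]| = 1).

(* A large set with multiplicity mu, LS(t,k,n;mu): a family (a list, so that
   the same system may occur several times) of Steiner systems S(t,k,n) on the
   common n-set 'I_n such that every k-subset is a block of exactly mu of the
   systems (counted with repetition). *)
Definition large_set_mult (t k n mu : nat) (F : seq {set {set 'I_n}}) : Prop :=
  (forall B, B \in F -> steiner_system t k n B) /\
  (forall S : {set 'I_n}, #|S| = k -> count (fun B : {set {set 'I_n}} => S \in B) F = mu).

From mathcomp Require Import all_boot zify.

(* The 132 hexads of the small Witt design S(5,6,12), relabelled by 14 (resp. 105)
   permutations of the twelve points, form an LS(5,6,12;2) (resp. an LS(5,6,12;15));
   this is checked by computation.  Concatenating large sets adds their multiplicities,
   and every mu >= 2 outside {3, 5, ..., 13} is of the form 2a + 15b.  Deriving at a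
   point (keeping the blocks through it, then deleting it) turns an S(5,6,12) into an
   S(4,5,11), hence an LS(5,6,12;mu) into an LS(4,5,11;mu). *)

Section LargeSetSums.

Variables t k n : nat.

Lemma large_set_nil : large_set_mult t k n 0 [::].
Proof. by []. Qed.

Lemma large_set_cat mu nu F G :
  large_set_mult t k n mu F -> large_set_mult t k n nu G ->
  large_set_mult t k n (mu + nu) (F ++ G).
Proof.
case=> sysF cntF [sysG cntG]; split.
  by move=> B; rewrite mem_cat => /orP[/sysF | /sysG].
by move=> S cardS; rewrite count_cat cntF ?cntG.
Qed.

Lemma large_set_nseq m mu F :
  large_set_mult t k n mu F -> large_set_mult t k n (m * mu) (flatten (nseq m F)).
Proof.
move=> lsF; elim: m => [|m IHm]; first exact: large_set_nil.
by rewrite mulSn; apply: large_set_cat.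
Qed.

End LargeSetSums.

Lemma two_fifteen_combination {mu} :
  2 <= mu -> mu \notin [:: 3; 5; 7; 9; 11; 13] -> exists a b, mu = a * 2 + b * 15.
Proof.
rewrite !inE !negb_or => mu_ge2 /and5P[ne3 ne5 ne7 ne9 /andP[ne11 ne13]].
have := odd_double_half mu; rewrite -muln2.
case: (odd mu) => /= mu_eq; last by exists mu./2, 0; lia.
by exists (mu./2 - 7), 1; lia.
Qed.

Section DerivedDesign.

Variable n : nat.

Definition extend_max (S : {set 'I_n}) : {set 'I_n.+1} :=
  ord_max |: [set lift ord_max x | x in S].

Definition derived_blocks (B : {set {set 'I_n.+1}}) : {set {set 'I_n}} :=
  [set S | extend_max S \in B].

Lemma mem_extend_max_lift S x : (lift ord_max x \in extend_max S) = (x \in S).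
Proof.
by rewrite !inE eq_sym (negbTE (neq_lift _ _)) (mem_imset _ _ (@lift_inj _ _)).
Qed.

Lemma card_extend_max S : #|extend_max S| = #|S|.+1.
Proof.
rewrite cardsU1 card_imset; last exact: lift_inj.
by case: imsetP => // -[x _ /eqP]; rewrite (negbTE (neq_lift _ _)).
Qed.

Lemma extend_max_inj : injective extend_max.
Proof. by move=> S1 S2 eqS; apply/setP => x; rewrite -!mem_extend_max_lift eqS. Qed.

Lemma subset_extend_max T S : (extend_max T \subset extend_max S) = (T \subset S).
Proof.
apply/idP/idP => [/subsetP sub_ext | sTS]; last by apply/setUS/imsetS.
by apply/subsetP => x; rewrite -!mem_extend_max_lift => /sub_ext.
Qed.

Lemma extend_max_preimage (b : {set 'I_n.+1}) :
  ord_max \in b -> extend_max [set x | lift ord_max x \in b] = b.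
Proof.
move=> max_b; apply/setP => y; case: (unliftP ord_max y) => [x -> | ->].
  by rewrite mem_extend_max_lift inE.
by rewrite !inE eqxx max_b.
Qed.

Lemma derived_steiner_system t k B :
  steiner_system t.+1 k.+1 n.+1 B -> steiner_system t k n (derived_blocks B).
Proof.
case=> cardB uniqB; split=> [S | T cardT].
  by rewrite inE => /cardB; rewrite card_extend_max => -[].
rewrite -(uniqB (extend_max T)) ?card_extend_max ?cardT //.
rewrite -(card_imset _ extend_max_inj); apply: eq_card => b; rewrite !inE.
apply/imsetP/andP => [[S] | [bB Tb]].
  by rewrite !inE => /andP[SB TS] ->; rewrite subset_extend_max.
have max_b : ord_max \in b by apply: (subsetP Tb); rewrite setU11.
exists [set x | lift ord_max x \in b]; last by rewrite extend_max_preimage.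
by rewrite !inE -subset_extend_max !extend_max_preimage // bB.
Qed.

Lemma derived_large_set t k mu F :
  large_set_mult t.+1 k.+1 n.+1 mu F ->
  large_set_mult t k n mu [seq derived_blocks B | B <- F].
Proof.
case=> sysF cntF; split=> [_ /mapP[B BF ->] | S cardS].
  exact/derived_steiner_system/sysF.
rewrite count_map -(cntF (extend_max S)) ?card_extend_max ?cardS //.
by apply: eq_count => B; rewrite /= inE.
Qed.

End DerivedDesign.

Fixpoint subseqs (s : seq nat) : seq (seq nat) :=
  if s is x :: s' then [seq x :: c | c <- subseqs s'] ++ subseqs s' else [:: [::]].

Lemma mem_subseqs s c : (c \in subseqs s) = subseq c s.
Proof.
elim: s c => [|x s IHs] [|y c] //=; rewrite mem_cat IHs ?sub0seq ?orbT //.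
have [->|neq_yx] := eqVneq y x.
  have cons_inj : injective (cons x) by move=> c1 c2 [].
  rewrite (mem_map cons_inj) IHs.
  by apply/orP/idP => [[//|/(subseq_trans (subseq_cons c x))] | ->]; [|left].
by rewrite orb_idl // => /mapP[c' _ [eq_yx _]]; rewrite eq_yx eqxx in neq_yx.
Qed.

Lemma uniq_subseqs s : uniq s -> uniq (subseqs s).
Proof.
elim: s => [|x s IHs] //= /andP[x_notin_s /IHs uniq_s].
rewrite cat_uniq map_inj_uniq ?uniq_s ?andbT //=; last by move=> c1 c2 [].
apply/hasPn => c; rewrite mem_subseqs => /mem_subseq c_s.
apply/mapP => -[c' _ c_eq]; move/negP: x_notin_s; apply.
by apply: c_s; rewrite c_eq mem_head.
Qed.

Definition ksubseqs t (s : seq nat) := [seq c <- subseqs s | size c == t].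

Lemma uniq_ksubseqs t s : uniq s -> uniq (ksubseqs t s).
Proof. by move=> uniq_s; rewrite filter_uniq ?uniq_subseqs. Qed.

Lemma count_ksubseqs t s c :
  uniq s -> size c = t -> count_mem c (ksubseqs t s) = subseq c s.
Proof.
move=> uniq_s size_c.
by rewrite count_uniq_mem ?uniq_ksubseqs // mem_filter size_c eqxx mem_subseqs.
Qed.

Lemma count_flatten_nseq (T : eqType) (x : T) mu s :
  count_mem x (flatten [seq nseq mu y | y <- s]) = count_mem x s * mu.
Proof. by elim: s => //= y s IHs; rewrite count_cat count_nseq IHs mulnDl. Qed.

(* Any relation would do here, sorting only serves to compare multisets;
   [lex] makes [sort] a normal form on lists of codes of equal length. *)
Fixpoint lex (a b : seq nat) : bool :=
  match a, b with
  | [::], _ => true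
  | _ :: _, [::] => false
  | x :: a', y :: b' => (x < y) || (x == y) && lex a' b'
  end.

Lemma perm_sort_lex (A B : seq (seq nat)) : sort lex A = B -> perm_eq A B.
Proof. by move<-; rewrite perm_sym perm_sort perm_refl. Qed.

(* A subset of 'I_n is encoded by the increasing list of its elements, so that
   certificates can be checked by [vm_compute]. *)
Definition is_code n (l : seq nat) := sorted ltn l && all (fun x => x < n) l.

Definition steiner_cert n t k (L : seq (seq nat)) :=
  [&& uniq L, all (fun l => is_code n l && (size l == k)) L &
      sort lex (flatten [seq ksubseqs t l | l <- L]) == ksubseqs t (iota 0 n)].

Definition large_set_cert n t k mu (Ls : seq (seq (seq nat))) :=
  all (steiner_cert n t k) Ls &&
  (sort lex (flatten Ls) == flatten [seq nseq mu c | c <- ksubseqs k (iota 0 n)]).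

Section Codes.

Variable n : nat.

Definition code (S : {set 'I_n}) : seq nat := [seq val x | x <- enum S].

Definition decode (l : seq nat) : {set 'I_n} := [set x | val x \in l].

Definition blocks_of (L : seq (seq nat)) : {set {set 'I_n}} := [set S | code S \in L].

Lemma code_filter S : code S = [seq val x | x <- enum 'I_n & x \in S].
Proof. by rewrite /code enumT /enum_mem. Qed.

Lemma mem_code S x : (val x \in code S) = (x \in S).
Proof. by rewrite (mem_map val_inj) mem_enum. Qed.

Lemma size_code S : size (code S) = #|S|.
Proof. by rewrite size_map cardE. Qed.

Lemma codeK : cancel code decode.
Proof. by move=> S; apply/setP => x; rewrite inE mem_code. Qed.

Lemma subseq_code_iota S : subseq (code S) (iota 0 n).
Proof. by rewrite code_filter -val_enum_ord map_subseq ?filter_subseq. Qed.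

Lemma sorted_code S : sorted ltn (code S).
Proof. apply: (subseq_sorted ltn_trans (subseq_code_iota S)); exact: iota_ltn_sorted. Qed.

Lemma code_in_ksubseqs S : code S \in ksubseqs #|S| (iota 0 n).
Proof. by rewrite mem_filter size_code eqxx mem_subseqs subseq_code_iota. Qed.

Lemma decodeK l : is_code n l -> code (decode l) = l.
Proof.
case/andP=> sorted_l /allP l_lt_n.
apply: (irr_sorted_eq ltn_trans ltnn) => // [|x]; first exact: sorted_code.
apply/mapP/idP => [[y] | x_l]; first by rewrite mem_enum inE => y_l ->.
by exists (Ordinal (l_lt_n x x_l)); rewrite ?mem_enum ?inE.
Qed.

Lemma subset_code (T S : {set 'I_n}) : (T \subset S) = subseq (code T) (code S).
Proof.
apply/idP/idP => [/subsetP TS | /mem_subseq sub_code]; last first.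
  by apply/subsetP => x; rewrite -!mem_code => /sub_code.
rewrite !code_filter map_subseq //.
suff -> : [seq x <- enum 'I_n | x \in T] = [seq x <- [seq x <- enum 'I_n | x \in S] | x \in T].
  exact: filter_subseq.
by rewrite -filter_predI; apply: eq_filter => x /=; case: (boolP (x \in T)) => // /TS ->.
Qed.

Lemma steiner_cert_sound t k L : steiner_cert n t k L -> steiner_system t k n (blocks_of L).
Proof.
case/and3P=> _ /allP codes_L /eqP/perm_sort_lex perm_tsets; split=> [S | T cardT].
  by rewrite inE => /codes_L /andP[_ /eqP]; rewrite size_code.
have uniq_L l : l \in L -> uniq l.
  by case/codes_L/andP => /andP[/(sorted_uniq ltn_trans ltnn)].
have count_T : count (subseq (code T)) L = 1.
  have one_T : count_mem (code T) (ksubseqs t (iota 0 n)) = 1.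
    by rewrite count_uniq_mem ?uniq_ksubseqs ?iota_uniq // -cardT code_in_ksubseqs.
  rewrite -one_T -(permP perm_tsets) count_flatten -map_comp -sumn_count.
  by congr sumn; apply/eq_in_map => l l_L /=; rewrite count_ksubseqs ?size_code ?uniq_L.
have [l0 filter_L] : exists l0, [seq l <- L | subseq (code T) l] = [:: l0].
  by move: count_T; rewrite -size_filter; case: filter => [|l0 []] //; exists l0.
have : l0 \in [seq l <- L | subseq (code T) l] by rewrite filter_L mem_head.
rewrite mem_filter => /andP[_ /codes_L /andP[code_l0 _]].
rewrite -(cards1 (decode l0)); apply: eq_card => b.
rewrite !inE subset_code andbC -(mem_filter (subseq (code T))) filter_L inE.
by apply/eqP/eqP => [<- | ->]; [rewrite codeK | exact: decodeK].
Qed.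

Lemma large_set_cert_sound t k mu Ls :
  large_set_cert n t k mu Ls -> large_set_mult t k n mu [seq blocks_of L | L <- Ls].
Proof.
case/andP=> /allP certs_Ls /eqP/perm_sort_lex perm_blocks.
split=> [_ /mapP[L L_Ls ->] | S cardS].
  exact/steiner_cert_sound/certs_Ls.
have one_S : count_mem (code S) (ksubseqs k (iota 0 n)) = 1.
  by rewrite count_uniq_mem ?uniq_ksubseqs ?iota_uniq // -cardS code_in_ksubseqs.
rewrite -[mu]mul1n -one_S -count_flatten_nseq -(permP perm_blocks) count_flatten.
rewrite count_map -sumn_count; congr sumn; apply/eq_in_map => L L_Ls /=.
by case/and3P: (certs_Ls L L_Ls) => uniq_L _ _; rewrite inE count_uniq_mem.
Qed.

End Codes.

Definition relabel (g : seq nat) (L : seq (seq nat)) : seq (seq nat) :=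
  [seq sort leq [seq nth 0 g x | x <- l] | l <- L].

Definition witt_blocks : seq (seq nat) :=
  [:: [:: 0; 1; 2; 3; 4; 9]; [:: 0; 1; 2; 3; 5; 11]; [:: 0; 1; 2; 3; 6; 7]; [:: 0; 1; 2; 3; 8; 10];
    [:: 0; 1; 2; 4; 5; 7]; [:: 0; 1; 2; 4; 6; 8]; [:: 0; 1; 2; 4; 10; 11]; [:: 0; 1; 2; 5; 6; 10];
    [:: 0; 1; 2; 5; 8; 9]; [:: 0; 1; 2; 6; 9; 11]; [:: 0; 1; 2; 7; 8; 11]; [:: 0; 1; 2; 7; 9; 10];
    [:: 0; 1; 3; 4; 5; 8]; [:: 0; 1; 3; 4; 6; 10]; [:: 0; 1; 3; 4; 7; 11]; [:: 0; 1; 3; 5; 6; 9];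
    [:: 0; 1; 3; 5; 7; 10]; [:: 0; 1; 3; 6; 8; 11]; [:: 0; 1; 3; 7; 8; 9]; [:: 0; 1; 3; 9; 10; 11];
    [:: 0; 1; 4; 5; 6; 11]; [:: 0; 1; 4; 5; 9; 10]; [:: 0; 1; 4; 6; 7; 9]; [:: 0; 1; 4; 7; 8; 10];
    [:: 0; 1; 4; 8; 9; 11]; [:: 0; 1; 5; 6; 7; 8]; [:: 0; 1; 5; 7; 9; 11]; [:: 0; 1; 5; 8; 10; 11];
    [:: 0; 1; 6; 7; 10; 11]; [:: 0; 1; 6; 8; 9; 10]; [:: 0; 2; 3; 4; 5; 6]; [:: 0; 2; 3; 4; 7; 10];
    [:: 0; 2; 3; 4; 8; 11]; [:: 0; 2; 3; 5; 7; 8]; [:: 0; 2; 3; 5; 9; 10]; [:: 0; 2; 3; 6; 8; 9];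
    [:: 0; 2; 3; 6; 10; 11]; [:: 0; 2; 3; 7; 9; 11]; [:: 0; 2; 4; 5; 8; 10];
    [:: 0; 2; 4; 5; 9; 11]; [:: 0; 2; 4; 6; 7; 11]; [:: 0; 2; 4; 6; 9; 10]; [:: 0; 2; 4; 7; 8; 9];
    [:: 0; 2; 5; 6; 7; 9]; [:: 0; 2; 5; 6; 8; 11]; [:: 0; 2; 5; 7; 10; 11]; [:: 0; 2; 6; 7; 8; 10];
    [:: 0; 2; 8; 9; 10; 11]; [:: 0; 3; 4; 5; 7; 9]; [:: 0; 3; 4; 5; 10; 11]; [:: 0; 3; 4; 6; 7; 8];
    [:: 0; 3; 4; 6; 9; 11]; [:: 0; 3; 4; 8; 9; 10]; [:: 0; 3; 5; 6; 7; 11]; [:: 0; 3; 5; 6; 8; 10];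
    [:: 0; 3; 5; 8; 9; 11]; [:: 0; 3; 6; 7; 9; 10]; [:: 0; 3; 7; 8; 10; 11];
    [:: 0; 4; 5; 6; 7; 10]; [:: 0; 4; 5; 6; 8; 9]; [:: 0; 4; 5; 7; 8; 11]; [:: 0; 4; 6; 8; 10; 11];
    [:: 0; 4; 7; 9; 10; 11]; [:: 0; 5; 6; 9; 10; 11]; [:: 0; 5; 7; 8; 9; 10];
    [:: 0; 6; 7; 8; 9; 11]; [:: 1; 2; 3; 4; 5; 10]; [:: 1; 2; 3; 4; 6; 11]; [:: 1; 2; 3; 4; 7; 8];
    [:: 1; 2; 3; 5; 6; 8]; [:: 1; 2; 3; 5; 7; 9]; [:: 1; 2; 3; 6; 9; 10]; [:: 1; 2; 3; 7; 10; 11];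
    [:: 1; 2; 3; 8; 9; 11]; [:: 1; 2; 4; 5; 6; 9]; [:: 1; 2; 4; 5; 8; 11]; [:: 1; 2; 4; 6; 7; 10];
    [:: 1; 2; 4; 7; 9; 11]; [:: 1; 2; 4; 8; 9; 10]; [:: 1; 2; 5; 6; 7; 11]; [:: 1; 2; 5; 7; 8; 10];
    [:: 1; 2; 5; 9; 10; 11]; [:: 1; 2; 6; 7; 8; 9]; [:: 1; 2; 6; 8; 10; 11]; [:: 1; 3; 4; 5; 6; 7];
    [:: 1; 3; 4; 5; 9; 11]; [:: 1; 3; 4; 6; 8; 9]; [:: 1; 3; 4; 7; 9; 10]; [:: 1; 3; 4; 8; 10; 11];
    [:: 1; 3; 5; 6; 10; 11]; [:: 1; 3; 5; 7; 8; 11]; [:: 1; 3; 5; 8; 9; 10];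
    [:: 1; 3; 6; 7; 8; 10]; [:: 1; 3; 6; 7; 9; 11]; [:: 1; 4; 5; 6; 8; 10]; [:: 1; 4; 5; 7; 8; 9];
    [:: 1; 4; 5; 7; 10; 11]; [:: 1; 4; 6; 7; 8; 11]; [:: 1; 4; 6; 9; 10; 11];
    [:: 1; 5; 6; 7; 9; 10]; [:: 1; 5; 6; 8; 9; 11]; [:: 1; 7; 8; 9; 10; 11];
    [:: 2; 3; 4; 5; 7; 11]; [:: 2; 3; 4; 5; 8; 9]; [:: 2; 3; 4; 6; 7; 9]; [:: 2; 3; 4; 6; 8; 10];
    [:: 2; 3; 4; 9; 10; 11]; [:: 2; 3; 5; 6; 7; 10]; [:: 2; 3; 5; 6; 9; 11];
    [:: 2; 3; 5; 8; 10; 11]; [:: 2; 3; 6; 7; 8; 11]; [:: 2; 3; 7; 8; 9; 10]; [:: 2; 4; 5; 6; 7; 8];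
    [:: 2; 4; 5; 6; 10; 11]; [:: 2; 4; 5; 7; 9; 10]; [:: 2; 4; 6; 8; 9; 11];
    [:: 2; 4; 7; 8; 10; 11]; [:: 2; 5; 6; 8; 9; 10]; [:: 2; 5; 7; 8; 9; 11];
    [:: 2; 6; 7; 9; 10; 11]; [:: 3; 4; 5; 6; 8; 11]; [:: 3; 4; 5; 6; 9; 10];
    [:: 3; 4; 5; 7; 8; 10]; [:: 3; 4; 6; 7; 10; 11]; [:: 3; 4; 7; 8; 9; 11]; [:: 3; 5; 6; 7; 8; 9];
    [:: 3; 5; 7; 9; 10; 11]; [:: 3; 6; 8; 9; 10; 11]; [:: 4; 5; 6; 7; 9; 11];
    [:: 4; 5; 8; 9; 10; 11]; [:: 4; 6; 7; 8; 9; 10]; [:: 5; 6; 7; 8; 10; 11]].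

Definition relabelings2 : seq (seq nat) :=
  [:: [:: 0; 10; 1; 2; 3; 5; 6; 4; 7; 9; 8; 11]; [:: 10; 1; 2; 0; 3; 5; 4; 7; 6; 8; 9; 11];
    [:: 1; 0; 3; 2; 4; 5; 6; 8; 9; 7; 10; 11]; [:: 0; 9; 1; 3; 2; 5; 4; 6; 7; 8; 10; 11];
    [:: 9; 0; 1; 2; 4; 5; 3; 6; 8; 7; 10; 11]; [:: 9; 7; 10; 11; 0; 2; 3; 4; 1; 6; 5; 8];
    [:: 9; 8; 10; 11; 1; 2; 0; 4; 5; 6; 3; 7]; [:: 10; 9; 11; 1; 0; 3; 2; 5; 6; 4; 7; 8];
    [:: 10; 0; 1; 3; 4; 2; 5; 7; 6; 9; 8; 11]; [:: 1; 0; 2; 3; 4; 6; 7; 5; 8; 10; 9; 11];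
    [:: 10; 3; 11; 0; 1; 2; 4; 5; 6; 7; 8; 9]; [:: 4; 7; 8; 9; 10; 11; 1; 0; 2; 3; 5; 6];
    [:: 4; 7; 8; 9; 10; 11; 1; 0; 2; 3; 5; 6]; [:: 0; 1; 2; 3; 4; 5; 6; 7; 8; 9; 10; 11]].

Definition relabelings15 : seq (seq nat) :=
  [:: [:: 1; 10; 0; 3; 2; 5; 4; 7; 6; 8; 9; 11]; [:: 2; 11; 3; 1; 5; 4; 7; 6; 9; 8; 10; 0];
    [:: 5; 7; 8; 9; 10; 11; 1; 2; 0; 3; 4; 6]; [:: 11; 8; 1; 0; 2; 3; 4; 5; 7; 6; 9; 10];
    [:: 11; 7; 0; 1; 2; 3; 4; 6; 5; 8; 9; 10]; [:: 3; 2; 0; 5; 4; 6; 8; 7; 9; 11; 1; 10];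
    [:: 3; 2; 1; 4; 5; 7; 6; 9; 10; 8; 11; 0]; [:: 1; 11; 2; 0; 4; 3; 5; 7; 6; 8; 10; 9];
    [:: 1; 7; 3; 4; 5; 2; 6; 8; 9; 10; 11; 0]; [:: 9; 8; 10; 11; 1; 2; 0; 3; 5; 6; 4; 7];
    [:: 0; 9; 2; 1; 4; 3; 5; 6; 8; 7; 10; 11]; [:: 7; 10; 11; 1; 0; 3; 2; 4; 5; 6; 8; 9];
    [:: 11; 10; 0; 2; 1; 4; 5; 6; 3; 7; 8; 9]; [:: 10; 8; 11; 0; 2; 3; 4; 1; 5; 7; 6; 9];
    [:: 5; 3; 6; 4; 7; 8; 10; 9; 11; 0; 1; 2]; [:: 1; 11; 2; 3; 4; 5; 6; 7; 9; 8; 10; 0];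
    [:: 9; 0; 1; 3; 2; 5; 4; 7; 8; 6; 10; 11]; [:: 2; 0; 1; 3; 5; 6; 4; 8; 7; 10; 11; 9];
    [:: 4; 6; 7; 8; 9; 10; 11; 0; 2; 1; 3; 5]; [:: 11; 9; 1; 2; 0; 3; 5; 6; 4; 8; 7; 10];
    [:: 11; 10; 0; 1; 2; 3; 5; 4; 7; 8; 9; 6]; [:: 4; 1; 2; 5; 6; 7; 9; 8; 10; 11; 0; 3];
    [:: 2; 11; 1; 4; 3; 5; 6; 7; 9; 8; 10; 0]; [:: 9; 7; 10; 11; 0; 1; 2; 3; 4; 6; 5; 8];
    [:: 1; 11; 3; 4; 5; 2; 6; 7; 8; 9; 10; 0]; [:: 11; 8; 1; 0; 2; 4; 5; 6; 3; 7; 9; 10];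
    [:: 0; 10; 2; 3; 1; 5; 4; 6; 7; 9; 8; 11]; [:: 11; 1; 2; 3; 5; 4; 6; 7; 8; 10; 9; 0];
    [:: 1; 10; 2; 0; 3; 4; 6; 5; 7; 9; 8; 11]; [:: 2; 11; 0; 3; 5; 4; 6; 7; 9; 10; 8; 1];
    [:: 11; 9; 0; 1; 3; 2; 5; 6; 4; 7; 8; 10]; [:: 1; 11; 2; 3; 0; 4; 5; 6; 7; 8; 9; 10];
    [:: 10; 2; 11; 0; 1; 3; 4; 5; 6; 7; 8; 9]; [:: 9; 7; 10; 11; 1; 2; 3; 4; 5; 0; 6; 8];
    [:: 11; 2; 3; 1; 4; 5; 6; 7; 9; 10; 8; 0]; [:: 1; 10; 2; 3; 4; 0; 6; 7; 5; 8; 9; 11];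
    [:: 5; 2; 4; 6; 7; 8; 9; 10; 0; 11; 1; 3]; [:: 11; 6; 1; 2; 0; 3; 4; 5; 7; 8; 9; 10];
    [:: 2; 11; 4; 3; 5; 6; 8; 9; 7; 10; 0; 1]; [:: 1; 10; 2; 3; 4; 5; 7; 8; 6; 9; 11; 0];
    [:: 8; 10; 11; 0; 1; 2; 3; 4; 6; 5; 7; 9]; [:: 7; 5; 8; 9; 10; 11; 0; 2; 1; 3; 4; 6];
    [:: 0; 11; 2; 1; 4; 3; 6; 7; 8; 5; 9; 10]; [:: 0; 10; 1; 2; 4; 3; 6; 7; 5; 9; 8; 11];
    [:: 7; 0; 2; 3; 1; 4; 5; 6; 8; 9; 10; 11]; [:: 2; 11; 1; 3; 4; 6; 5; 8; 9; 10; 7; 0];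
    [:: 9; 8; 10; 11; 0; 1; 2; 4; 5; 3; 6; 7]; [:: 2; 0; 3; 4; 5; 7; 8; 6; 9; 10; 11; 1];
    [:: 8; 10; 11; 1; 2; 3; 4; 5; 0; 6; 7; 9]; [:: 1; 11; 2; 4; 3; 5; 7; 6; 9; 8; 10; 0];
    [:: 1; 8; 0; 2; 3; 5; 6; 7; 4; 9; 10; 11]; [:: 3; 10; 2; 4; 5; 6; 7; 9; 8; 11; 0; 1];
    [:: 3; 11; 4; 5; 7; 6; 8; 10; 9; 0; 2; 1]; [:: 2; 10; 1; 3; 4; 6; 5; 7; 8; 9; 11; 0];
    [:: 8; 6; 9; 10; 11; 0; 1; 2; 4; 5; 3; 7]; [:: 8; 7; 9; 10; 11; 0; 2; 1; 4; 5; 3; 6];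
    [:: 5; 10; 11; 0; 1; 2; 3; 4; 6; 7; 8; 9]; [:: 6; 0; 1; 2; 3; 5; 4; 7; 8; 9; 10; 11];
    [:: 0; 11; 1; 2; 3; 5; 4; 7; 6; 8; 10; 9]; [:: 2; 0; 1; 3; 5; 4; 7; 6; 8; 9; 11; 10];
    [:: 10; 8; 11; 1; 2; 0; 3; 4; 6; 7; 5; 9]; [:: 1; 11; 2; 0; 4; 3; 5; 7; 6; 9; 8; 10];
    [:: 7; 9; 10; 11; 0; 2; 3; 1; 4; 5; 6; 8]; [:: 5; 8; 9; 10; 11; 0; 1; 2; 3; 4; 6; 7];
    [:: 1; 10; 3; 2; 4; 5; 7; 8; 9; 6; 11; 0]; [:: 2; 0; 1; 4; 3; 6; 7; 5; 9; 10; 8; 11];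
    [:: 2; 10; 3; 5; 6; 4; 7; 8; 9; 11; 0; 1]; [:: 10; 3; 11; 1; 0; 2; 4; 5; 6; 7; 8; 9];
    [:: 10; 1; 2; 3; 4; 6; 5; 7; 8; 9; 11; 0]; [:: 2; 5; 6; 7; 8; 9; 10; 11; 1; 0; 3; 4];
    [:: 8; 10; 11; 0; 1; 3; 2; 5; 6; 4; 7; 9]; [:: 10; 8; 11; 0; 1; 2; 4; 5; 3; 6; 7; 9];
    [:: 2; 0; 3; 1; 4; 6; 5; 7; 8; 10; 9; 11]; [:: 4; 3; 5; 6; 7; 8; 9; 10; 11; 0; 2; 1];
    [:: 8; 10; 11; 0; 1; 2; 4; 5; 3; 7; 6; 9]; [:: 11; 2; 3; 1; 4; 5; 6; 7; 8; 9; 10; 0];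
    [:: 0; 10; 1; 2; 4; 3; 5; 7; 8; 9; 6; 11]; [:: 10; 1; 2; 0; 3; 4; 6; 7; 5; 9; 8; 11];
    [:: 7; 9; 10; 11; 0; 1; 2; 4; 5; 3; 6; 8]; [:: 8; 11; 0; 2; 1; 4; 5; 6; 7; 3; 9; 10];
    [:: 1; 11; 2; 3; 4; 5; 6; 8; 7; 9; 10; 0]; [:: 6; 8; 9; 10; 11; 1; 2; 3; 4; 5; 0; 7];
    [:: 10; 0; 2; 3; 4; 1; 5; 7; 6; 9; 8; 11]; [:: 11; 9; 1; 2; 0; 4; 3; 5; 7; 8; 6; 10];
    [:: 0; 11; 1; 2; 4; 5; 3; 6; 8; 7; 9; 10]; [:: 9; 8; 10; 11; 0; 1; 2; 4; 3; 5; 7; 6];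
    [:: 10; 1; 2; 4; 5; 6; 7; 8; 3; 9; 11; 0]; [:: 11; 1; 2; 3; 5; 4; 6; 7; 9; 8; 10; 0];
    [:: 7; 10; 11; 1; 0; 2; 4; 5; 6; 3; 8; 9]; [:: 1; 9; 2; 0; 3; 4; 6; 5; 7; 8; 10; 11];
    [:: 3; 2; 1; 4; 5; 7; 6; 8; 9; 10; 11; 0]; [:: 4; 8; 9; 10; 11; 0; 1; 3; 2; 5; 6; 7];
    [:: 11; 7; 0; 1; 3; 2; 5; 6; 4; 8; 9; 10]; [:: 11; 10; 1; 2; 3; 0; 4; 6; 5; 7; 8; 9];
    [:: 0; 10; 1; 2; 3; 5; 4; 7; 6; 8; 9; 11]; [:: 7; 0; 2; 4; 3; 5; 6; 8; 9; 10; 11; 1];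
    [:: 10; 9; 11; 0; 2; 1; 4; 5; 6; 7; 3; 8]; [:: 11; 8; 1; 2; 3; 0; 4; 6; 5; 7; 9; 10];
    [:: 1; 11; 2; 3; 0; 5; 6; 4; 7; 8; 9; 10]; [:: 10; 9; 11; 0; 1; 2; 3; 5; 4; 7; 8; 6];
    [:: 10; 9; 11; 0; 1; 2; 4; 3; 5; 7; 8; 6]; [:: 9; 4; 10; 11; 1; 0; 3; 2; 5; 6; 7; 8];
    [:: 10; 8; 11; 0; 2; 3; 1; 4; 5; 6; 7; 9]; [:: 1; 11; 2; 3; 0; 4; 5; 6; 8; 9; 7; 10];
    [:: 6; 10; 11; 1; 2; 3; 4; 5; 0; 7; 8; 9]].

Lemma witt_large_set2_cert :
  large_set_cert 12 5 6 2 [seq relabel g witt_blocks | g <- relabelings2].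
Proof. by vm_compute. Qed.

Lemma witt_large_set15_cert :
  large_set_cert 12 5 6 15 [seq relabel g witt_blocks | g <- relabelings15].
Proof. by vm_compute. Qed.

Lemma large_set_5_6_12 {mu} :
  2 <= mu -> mu \notin [:: 3; 5; 7; 9; 11; 13] ->
  exists F : seq {set {set 'I_12}}, large_set_mult 5 6 12 mu F.
Proof.
move=> mu_ge2 mu_notin.
have [a [b ->]] := two_fifteen_combination mu_ge2 mu_notin.
eexists; apply: large_set_cat; apply: large_set_nseq; apply: large_set_cert_sound.
  exact: witt_large_set2_cert.
exact: witt_large_set15_cert.
Qed.

Theorem theorem23 (mu : nat) :
  2 <= mu -> mu \notin [:: 3; 5; 7; 9; 11; 13] ->
  (exists F : seq {set {set 'I_11}}, large_set_mult 4 5 11 mu F) /\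
  (exists F : seq {set {set 'I_12}}, large_set_mult 5 6 12 mu F).
Proof.
move=> mu_ge2 mu_notin.
have [F ls_F] := large_set_5_6_12 mu_ge2 mu_notin.
by split; [exists [seq derived_blocks 11 B | B <- F]; apply: derived_large_set | exists F].
Qed.
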